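(* For every integer $n\ge2$, $\gamma_{tr2}(P_2\square P_n)=\left\lceil\frac{3n}{2}\right\rceil$.
   Context: $P_m$ denotes the directed path with vertex set $\{0,1,\dots,m-1\}$ and arcs $(i,i+1)$ for $0\le i\le m-2$. The Cartesian product $D_1\square D_2$ has vertex set $V(D_1)\times V(D_2)$, with an arc from $(x_1,y_1)$ to $(x_2,y_2)$ iff either $(x_1,x_2)$ is an arc of $D_1$ and $y_1=y_2$, or $x_1=x_2$ and $(y_1,y_2)$ is an arc of $D_2$. For a digraph $D$ and positive integer $k$, a $k$-rainbow dominating function on $D$ is $f:V(D)\to\mathcal P(\{1,\dots,k\})$ such that every $v$ with $f(v)=\emptyset$ satisfies $\bigcup_{u\in N^-(v)}f(u)=\{1,\dots,k\}$, where $N^-(v)$ is the set of in-neighbors of $v$; its weight is $\sum_v|f(v)|$. It is total if additionally the subdigraph induced by $\{v:f(v)\ne\emptyset\}$ has no isolated vertex (a vertex with neither in- nor out-neighbors in it). $\gamma_{trk}(D)$ is the minimum weight of a total $k$-rainbow dominating function. *)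

From mathcomp Require Import all_boot.
Set Implicit Arguments. Unset Strict Implicit. Unset Printing Implicit Defensive.

(* A finite digraph is a finType V with an arc relation a : rel V
   (a u v means there is an arc u -> v).  Colours {1,...,k} are modelled by 'I_k. *)

Definition path_arc (m : nat) : rel 'I_m := fun i j => j == i.+1 :> nat.

Definition cart_arc (V1 V2 : finType) (a1 : rel V1) (a2 : rel V2) : rel (V1 * V2) :=
  fun x y => (a1 x.1 y.1 && (x.2 == y.2)) || ((x.1 == y.1) && a2 x.2 y.2).

Definition rainbow_dom (V : finType) (a : rel V) (k : nat) (f : V -> {set 'I_k}) : Prop :=
  forall v : V, f v = set0 -> \bigcup_(u | a u v) f u = [set: 'I_k].

(* total: the subdigraph induced by {v | f v <> set0} has no isolated vertex *)
Definition total_rainbow_dom (V : finType) (a : rel V) (k : nat) (f : V -> {set 'I_k}) : Prop :=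
  rainbow_dom a f /\
  forall v : V, f v != set0 ->
    exists u : V, f u != set0 /\ (a u v \/ a v u).

Definition rd_weight (V : finType) (k : nat) (f : V -> {set 'I_k}) : nat :=
  \sum_(v : V) #|f v|.

Definition is_gamma_trk (V : finType) (a : rel V) (k : nat) (g : nat) : Prop :=
  (exists f : V -> {set 'I_k}, total_rainbow_dom a f /\ rd_weight f = g) /\
  (forall f : V -> {set 'I_k}, total_rainbow_dom a f -> g <= rd_weight f).

From mathcomp Require Import all_boot zify.
Set Implicit Arguments. Unset Strict Implicit. Unset Printing Implicit Defensive.

(* An empty
   vertex gets both colours from its in-neighbours and a vertex of the support has a
   neighbour in the support.  On P_2 [] P_n these local constraints force every
   column of weight at most 1 to close a block of 2 (resp. 3) consecutive columns of
   weight at least 3 (resp. 5), so any k initial columns weigh at least 3k/2.  The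
   bound is attained by {1} on the first row and {0} on every other vertex of the
   second row. *)

Section RainbowNeighbourhoods.
Variables (V : finType) (a : rel V) (k : nat) (f : V -> {set 'I_k}).

Lemma card_bigcup_seq_leq (s : seq V) :
  #|\bigcup_(u <- s) f u| <= \sum_(u <- s) #|f u|.
Proof.
elim: s => [|u s IH]; first by rewrite !big_nil cards0.
by rewrite !big_cons (leq_trans (leq_card_setU _ _).1) ?leq_add2l.
Qed.

Lemma rainbow_dom_in_weight (s : seq V) v :
  rainbow_dom a f -> f v = set0 -> (forall u, a u v -> u \in s) ->
  k <= \sum_(u <- s) #|f u|.
Proof.
move=> hf /hf hcover hs.
apply: (@leq_trans #|[set: 'I_k]|); first by rewrite cardsT card_ord.
rewrite -hcover.
apply: leq_trans (card_bigcup_seq_leq s); apply: subset_leq_card.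
by apply/bigcupsP => u /hs us; rewrite bigcup_seq (bigcup_sup _ us).
Qed.

Lemma total_rainbow_dom_nbr_weight (s : seq V) v :
  total_rainbow_dom a f -> f v != set0 -> (forall u, a u v || a v u -> u \in s) ->
  0 < \sum_(u <- s) #|f u|.
Proof.
case=> _ htot /htot [u [fu0 huv]] hs.
rewrite (big_rem u) /=; last by apply: hs; case: huv => ->; rewrite ?orbT.
by rewrite ltn_addr // lt0n cards_eq0.
Qed.

End RainbowNeighbourhoods.

Lemma sum_lb_of_blocks (w : nat -> nat) (c d N : nat) :
  (forall m, 0 < m <= N ->
     exists2 k, 0 < k <= m & c * k <= d * \sum_(m - k <= j < m) w j) ->
  c * N <= d * \sum_(0 <= j < N) w j.
Proof.
move=> hblock; suff: forall m, m <= N -> c * m <= d * \sum_(0 <= j < m) w j by apply.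
elim/ltn_ind => -[_ _|m IH hm]; first by rewrite muln0.
have [k /andP [k0 km] hk] := hblock m.+1 hm.
rewrite (@big_cat_nat _ _ _ (m.+1 - k)) ?leq_subr // mulnDr -{1}(subnK km) mulnDr.
by rewrite leq_add // IH ?(leq_trans (leq_subr _ _)) // ltn_subrL k0.
Qed.

Section ColumnWeights.
Variables (N : nat) (a b : nat -> nat).
Hypothesis top_start : 0 < a 0.
Hypothesis bot_start : b 0 = 0 -> 2 <= a 0.
Hypothesis top_step : forall j, j.+1 < N -> a j.+1 = 0 -> 2 <= a j.
Hypothesis bot_step : forall j, j.+1 < N -> b j.+1 = 0 -> 2 <= a j.+1 + b j.
Hypothesis bot_total :
  forall j, j.+2 < N -> a j.+1 = 0 -> b j.+2 = 0 -> 0 < b j.+1 -> 0 < b j.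

Lemma column_block m : 0 < m <= N ->
  exists2 k, 0 < k <= m & 3 * k <= 2 * \sum_(m - k <= j < m) (a j + b j).
Proof.
case: m => [//|j] /= hj.
have [w2|w1] := leqP 2 (a j + b j).
  by exists 1; rewrite // subn1 /= big_nat1; lia.
have pair_block i : 3 <= a i + b i + (a i.+1 + b i.+1) ->
    exists2 k, 0 < k <= i.+2 & 3 * k <= 2 * \sum_(i.+2 - k <= j < i.+2) (a j + b j).
  by move=> h3; exists 2; rewrite // !subSS subn0 big_nat_recr //= big_nat1; lia.
case: j => [|i] in hj w1 *; first by case: (posnP (b 0)) => [/bot_start|]; lia.
case: (posnP (a i.+1)) => [ai0|ai_pos].
  apply: pair_block; have := top_step hj ai0.
  by case: (posnP (b i.+1)) => [/(bot_step hj)|]; lia.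
have bi0 : b i.+1 = 0 by lia.
have hbi := bot_step hj bi0.
have [w2|w1'] := leqP 2 (a i + b i); first by apply: pair_block; lia.
case: i => [|h] in hj w1 ai_pos bi0 hbi w1' *; first lia.
have ah0 : a h.+1 = 0 by lia.
have hah := top_step (ltnW hj) ah0.
have hbh : 0 < b h by apply: bot_total hj ah0 bi0 _; lia.
exists 3 => //; have -> : h.+3 - 3 = h by lia.
rewrite (big_nat_recr _ _ _ (leqW (leqnSn h))) big_nat_recr // big_nat1 /=; lia.
Qed.

Lemma two_column_sum_lb : 3 * N <= 2 * \sum_(0 <= j < N) (a j + b j).
Proof. exact: sum_lb_of_blocks column_block. Qed.

End ColumnWeights.

Notation grid n := (cart_arc (@path_arc 2) (@path_arc n)).

Lemma grid_arcE n (u v : 'I_2 * 'I_n) : grid n u v =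
  [&& u.1 == 0 :> nat, v.1 == 1 :> nat & u.2 == v.2 :> nat]
  || (u.1 == v.1 :> nat) && (v.2 == (u.2).+1 :> nat).
Proof.
case: u v => [u1 u2] [v1 v2]; rewrite /cart_arc /path_arc /=.
have := ltn_ord u1; have := ltn_ord v1.
by case: u1 => [[|[|//]] ?]; case: v1 => [[|[|//]] ?].
Qed.

Lemma grid_vertexE n (u : 'I_2 * 'I_n.+1) : u = (inord u.1, inord u.2).
Proof. by case: u => x y; rewrite !inord_val. Qed.

Lemma grid_in_nbr n i j (u : 'I_2 * 'I_n.+1) :
  grid n.+1 u (inord i, inord j) -> i < 2 -> j < n.+1 ->
  i = 1 /\ u = (inord 0, inord j) \/ 0 < j /\ u = (inord i, inord j.-1).
Proof.
move=> + hi hj; rewrite grid_arcE /= !inordK //.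
case/orP => [/and3P [/eqP u1 /eqP -> /eqP u2]|/andP [/eqP u1 /eqP ->]].
  by left; split; rewrite // {1}[u]grid_vertexE u1 u2.
by right; split; rewrite // {1}[u]grid_vertexE u1.
Qed.

Lemma grid_out_nbr n i j (u : 'I_2 * 'I_n.+1) :
  grid n.+1 (inord i, inord j) u -> i < 2 -> j < n.+1 ->
  i = 0 /\ u = (inord 1, inord j) \/ u = (inord i, inord j.+1).
Proof.
move=> + hi hj; rewrite grid_arcE /= !inordK //.
case/orP => [/and3P [/eqP -> /eqP u1 /eqP u2]|/andP [/eqP u1 /eqP u2]].
  by left; split; rewrite // {1}[u]grid_vertexE u1 -u2.
by right; rewrite {1}[u]grid_vertexE -u1 u2.
Qed.

Lemma rd_weight_grid n (f : 'I_2 * 'I_n.+1 -> {set 'I_2}) :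
  rd_weight f = \sum_(0 <= j < n.+1) (#|f (inord 0, inord j)| + #|f (inord 1, inord j)|).
Proof.
rewrite /rd_weight (eq_bigr (fun p => #|f (p.1, p.2)|)); last by case.
rewrite -(pair_bigA _ (fun i j => #|f (i, j)|)) /= big_ord_recl big_ord_recl big_ord0 addn0.
rewrite -big_split /= big_mkord; apply: eq_bigr => j _.
by rewrite !inord_val; congr (#|f (_, _)| + #|f (_, _)|); apply/val_inj; rewrite /= inordK.
Qed.

Section GridLowerBound.
Variables (n : nat) (f : 'I_2 * 'I_n.+1 -> {set 'I_2}).
Hypothesis hf : total_rainbow_dom (grid n.+1) f.
Let top j := #|f (inord 0, inord j)|.
Let bot j := #|f (inord 1, inord j)|.

Lemma grid_top_start : 0 < top 0.
Proof.
rewrite lt0n cards_eq0; apply/negP => /eqP f0.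
suff: 2 <= \sum_(u <- [::]) #|f u| by rewrite big_nil.
by apply: (rainbow_dom_in_weight hf.1 f0) => u /grid_in_nbr/(_ isT isT) [[]|[]].
Qed.

Lemma grid_bot_start : bot 0 = 0 -> 2 <= top 0.
Proof.
move/cards0_eq => f0.
have := rainbow_dom_in_weight (s := [:: (inord 0, inord 0)]) hf.1 f0; rewrite big_seq1; apply.
by move=> u /grid_in_nbr/(_ isT isT) [[_ ->]|[]] //; rewrite mem_seq1.
Qed.

Lemma grid_top_step j : j.+1 < n.+1 -> top j.+1 = 0 -> 2 <= top j.
Proof.
move=> hj /cards0_eq f0.
have := rainbow_dom_in_weight (s := [:: (inord 0, inord j)]) hf.1 f0; rewrite big_seq1; apply.
by move=> u /grid_in_nbr/(_ isT hj) [[]|[_ ->]] //; rewrite mem_seq1.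
Qed.

Lemma grid_bot_step j : j.+1 < n.+1 -> bot j.+1 = 0 -> 2 <= top j.+1 + bot j.
Proof.
move=> hj /cards0_eq f0.
have := rainbow_dom_in_weight (s := [:: (inord 0, inord j.+1); (inord 1, inord j)]) hf.1 f0.
rewrite big_cons big_seq1; apply.
by move=> u /grid_in_nbr/(_ isT hj) [[_ ->]|[_ ->]]; rewrite !inE eqxx ?orbT.
Qed.

Lemma grid_bot_total j : j.+2 < n.+1 ->
  top j.+1 = 0 -> bot j.+2 = 0 -> 0 < bot j.+1 -> 0 < bot j.
Proof.
move=> hj topj bot2 botj.
have := total_rainbow_dom_nbr_weight
  (s := [:: (inord 0, inord j.+1); (inord 1, inord j); (inord 1, inord j.+2)])
  (v := (inord 1, inord j.+1)) hf.
rewrite !big_cons big_nil -/(top j.+1) -/(bot j) -/(bot j.+2) topj bot2.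
rewrite !add0n addn0; apply; first by rewrite -cards_eq0 -lt0n.
move=> u /orP [/grid_in_nbr/(_ isT (ltnW hj)) [[_ ->]|[_ ->]]
             | /grid_out_nbr/(_ isT (ltnW hj)) [[]|->]] //.
all: by rewrite !inE eqxx ?orbT.
Qed.

Lemma grid_weight_lb : uphalf (3 * n.+1) <= rd_weight f.
Proof.
have := two_column_sum_lb grid_top_start grid_bot_start grid_top_step grid_bot_step
  grid_bot_total.
by rewrite -rd_weight_grid; lia.
Qed.

End GridLowerBound.

Definition ladder_rdf n (v : 'I_2 * 'I_n) : {set 'I_2} :=
  if v.1 == 0 :> nat then [set ord_max] else if odd v.2 then set0 else [set ord0].

Lemma ladder_rdf_rainbow n : rainbow_dom (grid n) (@ladder_rdf n).
Proof.
move=> [v1 [[|k] hk]]; rewrite /ladder_rdf /=.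
all: case: ifP => [_ /setP/(_ ord_max)|row1]; first by rewrite !inE eqxx.
  by move/setP/(_ ord0); rewrite !inE eqxx.
case: ifP => [oddk|_ /setP/(_ ord0)]; last by rewrite !inE eqxx.
have v1E : v1 = 1 :> nat by have := ltn_ord v1; move/negbT: row1; lia.
move=> _; apply/setP => c; rewrite inE; apply/bigcupP.
have [->|->] : c = ord0 \/ c = ord_max.
  by case: c => [[|[|//]] ?]; [left|right]; apply/val_inj.
- exists (v1, Ordinal (ltnW hk)); first by rewrite grid_arcE /= v1E /= !eqxx.
  by rewrite /ladder_rdf /= v1E /= (negPf oddk) inE.
- exists (ord0, Ordinal hk); first by rewrite grid_arcE /= v1E !eqxx.
  by rewrite /ladder_rdf /= inE.
Qed.

Lemma ladder_rdf_total n : 1 < n -> total_rainbow_dom (grid n) (@ladder_rdf n).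
Proof.
move=> hn; split; first exact: ladder_rdf_rainbow.
have top_ne0 (j : 'I_n) : ladder_rdf (ord0, j) != set0.
  by rewrite /ladder_rdf /= -cards_eq0 cards1.
move=> [v1 v2]; rewrite /ladder_rdf /=; case: ifP => row0 _.
  have v1E : v1 = ord0 by apply/val_inj/eqP.
  case: (ltnP v2.+1 n) => [hv|hv].
    exists (ord0, Ordinal hv); split; first exact: top_ne0.
    by right; rewrite grid_arcE /= v1E !eqxx.
  have hp : v2.-1 < n by have := ltn_ord v2; lia.
  exists (ord0, Ordinal hp); split; first exact: top_ne0.
  by left; rewrite grid_arcE /= v1E eqxx /=; apply/eqP; lia.
exists (ord0, v2); split; first exact: top_ne0.
have v1E : v1 = 1 :> nat by have := ltn_ord v1; move/negbT: row0; lia.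
by left; rewrite grid_arcE /= v1E !eqxx.
Qed.

Lemma sum_one_add_even n : \sum_(0 <= j < n) (1 + ~~ odd j) = uphalf (3 * n).
Proof.
elim: n => [|n IH]; first by rewrite big_geq.
rewrite big_nat_recr //= IH.
by have := odd_double_half n; case: (odd n) => /= ?; lia.
Qed.

Lemma ladder_rdf_weight n : rd_weight (@ladder_rdf n.+1) = uphalf (3 * n.+1).
Proof.
rewrite rd_weight_grid -sum_one_add_even; apply: eq_big_nat => j /andP [_ hj].
by rewrite /ladder_rdf /= !inordK // cards1; case: (odd j); rewrite /= ?cards0 ?cards1.
Qed.

Theorem proposition4p3 (n : nat) (hn : 2 <= n) :
  is_gamma_trk (cart_arc (@path_arc 2) (@path_arc n)) 2 (uphalf (3 * n)).
Proof.
case: n hn => [//|n] hn; split.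
  by exists (@ladder_rdf n.+1); split; [exact: ladder_rdf_total | exact: ladder_rdf_weight].
by move=> f; exact: grid_weight_lb.
Qed.
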